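(* Let $Y$ be a polygonal complex and let $G(Y)$ be a developable complex of groups over $Y$ whose universal cover is Bourdon's building $I_{p,v}$. Then the indexing $\mathrm{Ind}_{G(Y)}$ induced by $G(Y)$ is $v$-thick.
   Context: Let $Y'$ be the first barycentric subdivision of $Y$. Its vertices are barycenters of cells of $Y$. Each edge $a$ of $Y'$ joins the barycenters of cells $\tau \subsetneq \tau'$ and is oriented from $i(a) = \tau'$ to $t(a) = \tau$. A complex of groups $G(Y)$ assigns: - a group $G_\tau$ to each vertex of $Y'$; - a monomorphism $\psi_a : G_{i(a)} \to G_{t(a)}$ to each edge $a$; - twisting elements $g_{a,b} \in G_{t(a)}$ for composable pairs, satisfying $\mathrm{Ad}(g_{a,b})\psi_{ab} = \psi_a\psi_b$. An action without inversions of a group on a simply connected polygonal complex $X$ induces a complex of groups over the quotient, with local groups the stabilizers of chosen lifts of cells. $G(Y)$ is developable if it is isomorphic to a complex of groups arising in this way; $X$ is then its universal cover. For $p \geq 5$ and $v \geq 2$, Bourdon's building $I_{p,v}$ is the unique simply connected polygonal $2$-complex whose $2$-cells are regular right-angled hyperbolic $p$-gons and whose vertex links are $K_{v,v}$; it is locally finite, so all indices below are finite. The induced indexing assigns to each edge $a$ of $Y'$ the integer $\mathrm{Ind}_{G(Y)}(a) = |G_{t(a)} : \psi_a(G_{i(a)})|$. An indexing $\mathrm{Ind}$ of $Y'$ (a positive integer for each edge of $Y'$) is $v$-thick if, for every vertex $\sigma$ of $Y'$ that is the midpoint of an edge of $Y$, $\sum_{a : t(a) = \sigma} \mathrm{Ind}(a)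 = v$. *)

From Stdlib Require Import Relations List.
From mathcomp Require Import ssreflect ssrfun ssrbool eqtype ssrnat seq fintype.

Set Implicit Arguments.
Unset Strict Implicit.
Unset Printing Implicit Defensive.

Record group := Group {
  gcar :> Type;
  gmul : gcar -> gcar -> gcar;
  gone : gcar;
  ginv : gcar -> gcar;
  gmulA : forall x y z, gmul x (gmul y z) = gmul (gmul x y) z;
  gmul1g : forall x, gmul gone x = x;
  gmulVg : forall x, gmul (ginv x) x = gone }.

Arguments gmul {g}.
Arguments gone {g}.
Arguments ginv {g}.

Definition gconj (G : group) (g x : G) : G := gmul (gmul g x) (ginv g).

Definition is_hom (G H : group) (f : G -> H) : Prop :=
  forall x y, f (gmul x y) = gmul (f x) (f y).

Definition is_mono (G H : group) (f : G -> H) : Prop :=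
  is_hom f /\ injective f.

(** [index_is G P n]: the subgroup P (given as a predicate) has finite index
    n in G, i.e. there are exactly n left cosets r_k P. *)
Definition index_is (G : group) (P : G -> Prop) (n : nat) : Prop :=
  exists r : 'I_n -> G,
    (forall g : G, exists k, P (gmul (ginv (r k)) g)) /\
    (forall k l, P (gmul (ginv (r k)) (r l)) -> k = l).

(** * Combinatorial polygonal complexes *)

(** Vertices, edges (each with two endpoints [evert e false], [evert e true],
    possibly equal) and faces; face [f] is a polygon with [nsides f] sides,
    side [i] being the oriented edge [side f i = (e, b)] traversed from
    [evert e b] to [evert e (~~ b)]; consecutive sides (cyclically) match. *)
Record polycx := PolyCx {
  Vt : Type;
  Ed : Type;
  Fc : Type;
  evert : Ed -> bool -> Vt;
  nsides : Fc -> nat;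
  side : forall f, 'I_(nsides f) -> Ed * bool;
  nsides_ge3 : forall f, 2 < nsides f;
  side_closed : forall f (i : 'I_(nsides f)),
    evert (side i).1 (~~ (side i).2) = evert (side (ordS i)).1 (side (ordS i)).2 }.

Arguments evert {p}.
Arguments nsides {p}.
Arguments side {p f}.

Section PolyCx.
Variable K : polycx.

Definition ostart (o : Ed K * bool) : Vt K := evert o.1 o.2.
Definition oend (o : Ed K * bool) : Vt K := evert o.1 (~~ o.2).
Definition oflip (o : Ed K * bool) : Ed K * bool := (o.1, ~~ o.2).

Definition corner (f : Fc K) (i : 'I_(nsides f)) : Vt K := ostart (side i).

Fixpoint is_path (x : Vt K) (l : seq (Ed K * bool)) (y : Vt K) : Prop :=
  match l with
  | [::] => x = y
  | o :: l' => ostart o = x /\ is_path (oend o) l' y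
  end.

Definition face_loop (f : Fc K) (i : 'I_(nsides f)) : seq (Ed K * bool) :=
  rot i (map (@side K f) (enum 'I_(nsides f))).

Inductive htpy_step (x : Vt K) : seq (Ed K * bool) -> seq (Ed K * bool) -> Prop :=
| hs_back l1 l2 z (o : Ed K * bool) :
    is_path x l1 z -> ostart o = z ->
    htpy_step x (l1 ++ l2) (l1 ++ [:: o; oflip o] ++ l2)
| hs_face l1 l2 z (f : Fc K) (i : 'I_(nsides f)) :
    is_path x l1 z -> corner i = z ->
    htpy_step x (l1 ++ l2) (l1 ++ face_loop i ++ l2).

Definition homotopic (x : Vt K) := clos_refl_sym_trans _ (htpy_step x).

Definition simply_connected : Prop :=
  inhabited (Vt K) /\
  (forall x y, exists l, is_path x l y) /\
  (forall x l, is_path x l x -> homotopic x l [::]).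

(** The link at [x]: its vertices are the edge-ends at [x] (oriented edges
    starting at [x]); its edges are the corners of faces at [x]: the corner of
    [f] between side [i] and side [ordS i] joins [oflip (side i)] and
    [side (ordS i)].  [link_Kvv v x]: this link is the complete bipartite
    (simple) graph K_{v,v}. *)
Definition link_Kvv (v : nat) (x : Vt K) : Prop :=
  exists phi : Ed K * bool -> bool * 'I_v,
    (forall o o', ostart o = x -> ostart o' = x -> phi o = phi o' -> o = o') /\
    (forall lbl, exists o, ostart o = x /\ phi o = lbl) /\
    let lab1 (c : {f : Fc K & 'I_(nsides f)}) := phi (oflip (side (projT2 c))) in
    let lab2 (c : {f : Fc K & 'I_(nsides f)}) := phi (side (ordS (projT2 c))) in
    let key c := if (lab1 c).1 then ((lab2 c).2, (lab1 c).2)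
                 else ((lab1 c).2, (lab2 c).2) in
    (forall c, oend (side (projT2 c)) = x -> (lab1 c).1 <> (lab2 c).1) /\
    (forall c c', oend (side (projT2 c)) = x -> oend (side (projT2 c')) = x ->
        key c = key c' -> c = c') /\
    (forall k : 'I_v * 'I_v, exists c, oend (side (projT2 c)) = x /\ key c = k).

End PolyCx.

(** Bourdon's building I_{p,v}, characterised combinatorially (up to
    isomorphism, by Bourdon's uniqueness theorem): a simply connected
    polygonal 2-complex with embedded cells, all faces p-gons, all vertex
    links K_{v,v}. *)
Definition is_bourdon (p v : nat) (X : polycx) : Prop :=
  (forall e : Ed X, evert e true <> evert e false) /\
  (forall f : Fc X, nsides f = p) /\
  (forall f : Fc X, injective (@corner X f)) /\
  (forall f : Fc X, injective (fun i : 'I_(nsides f) => (side i).1)) /\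
  (forall x : Vt X, link_Kvv v x) /\
  simply_connected X.

(** * Scwols (small categories without loops), with a dimension function *)

Record scwol := Scwol {
  sV : Type;
  sE : Type;
  sdim : sV -> nat;
  si : sE -> sV;
  st : sE -> sV;
  scomp : sE -> sE -> sE -> Prop;   (* scomp a b c : c = a b (a after b) *)
  scomp_ti : forall a b c, scomp a b c -> st b = si a;
  scomp_i : forall a b c, scomp a b c -> si c = si b;
  scomp_t : forall a b c, scomp a b c -> st c = st a }.

Arguments sdim {s}.
Arguments si {s}.
Arguments st {s}.
Arguments scomp {s}.

(** First barycentric subdivision K' of a polygonal complex K.
    Vertices: barycenters of cells; edges: incidences tau < tau', oriented
    from tau' to tau (with multiplicity). *)
Section Sd.
Variable K : polycx.

Inductive sdV : Type :=
| SV of Vt K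
| SE of Ed K
| SF of Fc K.

Inductive sdE : Type :=
| EV of Ed K & bool
| FE (f : Fc K) of 'I_(nsides f)
| FV (f : Fc K) of 'I_(nsides f).

Definition sd_dim (x : sdV) : nat :=
  match x with SV _ => 0 | SE _ => 1 | SF _ => 2 end.

Definition sd_si (a : sdE) : sdV :=
  match a with EV e _ => SE e | FE f _ => SF f | FV f _ => SF f end.

Definition sd_st (a : sdE) : sdV :=
  match a with
  | EV e b => SV (evert e b)
  | FE f i => SE (side i).1
  | FV f i => SV (corner i)
  end.

(** composition: (edge side i -> endpoint c) o (face f -> side i)
    = (face f -> the corresponding corner of f) *)
Inductive sd_comp : sdE -> sdE -> sdE -> Prop :=
| SdComp (f : Fc K) (i : 'I_(nsides f)) (c : bool) :
    sd_comp (EV (side i).1 c) (FE i)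
            (FV (if c == (side i).2 then i else ordS i)).

Lemma sd_comp_ti a b c : sd_comp a b c -> sd_st b = sd_si a.
Proof. by case. Qed.

Lemma sd_comp_i a b c : sd_comp a b c -> sd_si c = sd_si b.
Proof. by case. Qed.

Lemma sd_comp_t a b c : sd_comp a b c -> sd_st c = sd_st a.
Proof.
case=> f i cc /=; case: eqP => [-> //|ne].
rewrite /corner /ostart -side_closed.
by case: cc ne; case: (side i).2.
Qed.

Definition Sd : scwol :=
  {| sV := sdV; sE := sdE; sdim := sd_dim; si := sd_si; st := sd_st;
     scomp := sd_comp; scomp_ti := sd_comp_ti; scomp_i := sd_comp_i;
     scomp_t := sd_comp_t |}.

End Sd.

Record cgroups (S : scwol) := CGroups {
  cG : sV S -> group;
  cpsi : forall a : sE S, cG (si a) -> cG (st a);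
  ctw : forall a b : sE S, cG (st a) }.  (* g_{a,b}; only used for composable pairs *)

Arguments cG {S}.
Arguments cpsi {S}.
Arguments ctw {S}.

Definition gcast (S : scwol) (G : sV S -> group) (x y : sV S) (e : x = y) :
  G x -> G y := fun g => eq_rect x (fun z => gcar (G z)) g y e.

Definition is_cgroups (S : scwol) (C : cgroups S) : Prop :=
  (forall a, is_mono (cpsi C a)) /\
  (forall a b c (h : scomp a b c) (x : cG C (si c)),
     gconj (ctw C a b) (gcast (scomp_t h) (cpsi C c x)) =
     cpsi C a (gcast (scomp_ti h) (cpsi C b (gcast (scomp_i h) x)))) /\
  (forall a b c ab bc abc (hab : scomp a b ab) (hbc : scomp b c bc)
          (h1 : scomp a bc abc) (h2 : scomp ab c abc),
     gmul (cpsi C a (gcast (scomp_ti hab) (ctw C b c))) (ctw C a bc) =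
     gmul (ctw C a b) (gcast (scomp_t hab) (ctw C ab c))).

Definition Ind_is (S : scwol) (C : cgroups S) (a : sE S) (n : nat) : Prop :=
  index_is (fun y : cG C (st a) => exists x, cpsi C a x = y) n.

Definition v_thick (v : nat) (Y : polycx) (C : cgroups (Sd Y)) : Prop :=
  forall e : Ed Y,
    exists (l : list (sE (Sd Y))) (n : sE (Sd Y) -> nat),
      NoDup l /\
      (forall a, In a l <-> st a = SE e) /\
      (forall a, In a l -> Ind_is C a (n a)) /\
      sumn (map n l) = v.

Record action (G : group) (S : scwol) := Action {
  actV : G -> sV S -> sV S;
  actE : G -> sE S -> sE S }.

Arguments actV {G S}.
Arguments actE {G S}.

(** Action (Bridson--Haefliger III.C.1.11) by dimension-preserving scwol
    automorphisms, without inversions. *)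
Definition is_action (G : group) (S : scwol) (A : action G S) : Prop :=
  (forall x, actV A gone x = x) /\ (forall a, actE A gone a = a) /\
  (forall g h x, actV A (gmul g h) x = actV A g (actV A h x)) /\
  (forall g h a, actE A (gmul g h) a = actE A g (actE A h a)) /\
  (forall g a, si (actE A g a) = actV A g (si a)) /\
  (forall g a, st (actE A g a) = actV A g (st a)) /\
  (forall g a b c, scomp a b c -> scomp (actE A g a) (actE A g b) (actE A g c)) /\
  (forall g x, sdim (actV A g x) = sdim x) /\
  (forall g a, actV A g (si a) <> st a) /\
  (forall g a, actV A g (si a) = si a -> actE A g a = a).

Record smorph (S T : scwol) := SMorph {
  mV : sV S -> sV T;
  mE : sE S -> sE T }.

Arguments mV {S T}.
Arguments mE {S T}.

Definition is_smorph (S T : scwol) (q : smorph S T) : Prop :=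
  (forall a, si (mE q a) = mV q (si a)) /\
  (forall a, st (mE q a) = mV q (st a)) /\
  (forall a b c, scomp a b c -> scomp (mE q a) (mE q b) (mE q c)) /\
  (forall x, sdim (mV q x) = sdim x).

(** [q] identifies T with the quotient scwol G\S. *)
Definition is_quotient (G : group) (S T : scwol) (A : action G S) (q : smorph S T) :=
  (forall g x, mV q (actV A g x) = mV q x) /\
  (forall g a, mE q (actE A g a) = mE q a) /\
  (forall y, exists x, mV q x = y) /\
  (forall b, exists a, mE q a = b) /\
  (forall x x', mV q x = mV q x' -> exists g, actV A g x = x') /\
  (forall a a', mE q a = mE q a' -> exists g, actE A g a = a').

(** [C] is isomorphic to a complex of groups arising (B--H III.C.2.9) from an
    action without inversions of a group Gam on (the subdivision of) a simply
    connected polygonal complex X satisfying [isX]; X is then the universal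
    cover of C.  The induced complex has local groups the stabilisers
    Gam_{lift s}, psi'_a = Ad(h_a), g'_{a,b} = h_a h_b h_{ab}^-1; the
    isomorphism (B--H III.C.2.4) is (phi_s, phiE a) with phi_s : G_s ~= Gam_{lift s}
    (realised as an injective hom into Gam with image the stabiliser). *)
Definition developable_with_cover (Y : polycx) (C : cgroups (Sd Y))
    (isX : polycx -> Prop) : Prop :=
  exists (X : polycx) (Gam : group) (A : action Gam (Sd X))
         (q : smorph (Sd X) (Sd Y))
         (lift : sV (Sd Y) -> sV (Sd X)) (liftE : sE (Sd Y) -> sE (Sd X))
         (h : sE (Sd Y) -> Gam)
         (phi : forall s : sV (Sd Y), cG C s -> Gam) (phiE : sE (Sd Y) -> Gam),
    isX X /\ is_action A /\ is_smorph q /\ is_quotient A q /\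
    (forall s, mV q (lift s) = s) /\
    (forall a, mE q (liftE a) = a /\ si (liftE a) = lift (si a)) /\
    (forall a, actV A (h a) (st (liftE a)) = lift (st a)) /\
    (forall s, is_mono (phi s) /\
       forall g : Gam, actV A g (lift s) = lift s <-> exists x, phi s x = g) /\
    (forall a, actV A (phiE a) (lift (st a)) = lift (st a)) /\
    (forall a (x : cG C (si a)),
       gconj (phiE a) (gconj (h a) (phi (si a) x)) = phi (st a) (cpsi C a x)) /\
    (forall a b c, scomp a b c ->
       gmul (phi (st a) (ctw C a b)) (phiE c) =
       gmul (gmul (phiE a) (gconj (h a) (phiE b)))
            (gmul (gmul (h a) (h b)) (ginv (h c)))).

(* Let e be an edge of Y and e' an edge of X above it.  The edges of X' ending
   at the midpoint of e' are the sides along e' of the faces of X, and at the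
   endpoint x of e' they correspond to the edges of the link K_{v,v} of x
   incident to the vertex given by e'; so there are exactly v of them.  The
   stabiliser of e', identified with G_e, permutes them, its orbits are the
   fibres over the edges a of Y' with t(a) = e, and since the action has no
   inversions the stabiliser of the lift of a is psi_a(G_{i(a)}).  By the
   orbit-stabiliser count these orbits have Ind(a) elements, and they add up
   to v. *)

From mathcomp Require Import ssreflect ssrfun ssrbool eqtype ssrnat seq fintype finset.
From mathcomp Require Import boolp.

Set Implicit Arguments.
Unset Strict Implicit.
Unset Printing Implicit Defensive.

Section GroupTheory.
Variable G : group.
Implicit Types x y z : G.

Lemma gmulgV x : gmul x (ginv x) = gone.
Proof.
rewrite -[gmul x (ginv x)]gmul1g -{1}(gmulVg (ginv x)) -gmulA (gmulA (ginv x) x).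
by rewrite gmulVg gmul1g gmulVg.
Qed.

Lemma gmulg1 x : gmul x gone = x.
Proof. by rewrite -(gmulVg x) gmulA gmulgV gmul1g. Qed.

Lemma gmulKg x y : gmul (ginv x) (gmul x y) = y.
Proof. by rewrite gmulA gmulVg gmul1g. Qed.

Lemma ginv_unique x y : gmul y x = gone -> y = ginv x.
Proof. by move=> yx1; rewrite -(gmulg1 y) -(gmulgV x) gmulA yx1 gmul1g. Qed.

Lemma ginvM x y : ginv (gmul x y) = gmul (ginv y) (ginv x).
Proof.
by symmetry; apply: ginv_unique; rewrite -gmulA (gmulA (ginv x)) gmulVg gmul1g gmulVg.
Qed.

Lemma gconjM x y z : gconj x (gconj y z) = gconj (gmul x y) z.
Proof. by rewrite /gconj ginvM !gmulA. Qed.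

Lemma gconjK x y : gconj x (gmul (gmul (ginv x) y) x) = y.
Proof. by rewrite /gconj !gmulA gmulgV gmul1g -gmulA gmulgV gmulg1. Qed.

End GroupTheory.

Section Morphisms.
Variables (G H : group) (f : G -> H).
Hypothesis f_hom : is_hom f.

Lemma hom1 : f gone = gone.
Proof.
have ff1 : gmul (f gone) (f gone) = f gone by rewrite -f_hom gmul1g.
by rewrite -(gmulKg (f gone) (f gone)) ff1 gmulVg.
Qed.

End Morphisms.

Lemma index_is_eq (G : group) (P Q : G -> Prop) n :
  (forall g, P g <-> Q g) -> index_is P n -> index_is Q n.
Proof.
move=> PQ [r [cover disj]]; exists r; split=> [g|k l /PQ/disj //].
by have [k /PQ] := cover g; exists k.
Qed.

Definition enumerates (T : Type) n (E : 'I_n -> T) (P : T -> Prop) :=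
  [/\ injective E, forall k, P (E k) & forall t, P t -> exists k, E k = t].

Lemma enumerates_comp (T U : Type) n (E : 'I_n -> T) (P : T -> Prop) (Q : U -> Prop)
    (f : T -> U) :
  enumerates E P -> (forall t, P t -> Q (f t)) ->
  (forall t t', P t -> P t' -> f t = f t' -> t = t') ->
  (forall u, Q u -> exists2 t, P t & f t = u) ->
  enumerates (f \o E) Q.
Proof.
case=> E_inj PE E_onto PQf f_inj f_onto; split=> [k l /f_inj | k | u /f_onto [t Pt <-]].
- by move/(_ (PE k) (PE l)); apply: E_inj.
- exact/PQf/PE.
- by have [k <-] := E_onto t Pt; exists k.
Qed.

Section OrbitStabilizer.
Variables (G : group) (T : Type) (act : G -> T -> T) (t0 : T).
Hypothesis act1 : forall t, act gone t = t.
Hypothesis actM : forall g h t, act (gmul g h) t = act g (act h t).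

Lemma index_is_orbit n (E : 'I_n -> T) :
  injective E -> (forall k, exists g, act g t0 = E k) ->
  (forall g, exists k, E k = act g t0) ->
  index_is (fun g => act g t0 = t0) n.
Proof.
move=> E_inj /choice[r rE] orbitE; exists r; split=> [g | k l].
  have [k Ek] := orbitE g; exists k.
  by rewrite actM -Ek -rE -actM gmulVg act1.
rewrite actM => /(congr1 (act (r k))).
by rewrite -actM gmulgV act1 !rE => /E_inj.
Qed.

End OrbitStabilizer.

Lemma In_mem (T : eqType) (s : seq T) x : List.In x s <-> x \in s.
Proof.
elim: s => [|y s IHs] //=; rewrite in_cons; split.
  by case=> [->|/IHs ->]; rewrite ?eqxx ?orbT.
by case/orP=> [/eqP->|/IHs]; [left|right].
Qed.

Lemma uniq_NoDup (T : eqType) (s : seq T) : uniq s -> List.NoDup s.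
Proof.
elim: s => [|y s IHs] /=; first by constructor.
by case/andP=> ys us; constructor; [move/In_mem; apply/negP | exact: IHs].
Qed.

Definition fibre_card (B : Type) n (pi : 'I_n -> B) (b : B) : nat :=
  #|[set k | (pi k : {classic B}) == b]|.

Lemma sum_fibre_card (B : Type) n (pi : 'I_n -> B) :
  exists l : list B, [/\ List.NoDup l, forall b, List.In b l <-> exists k, pi k = b
    & sumn (map (fibre_card pi) l) = n].
Proof.
pose s := [seq pi k : {classic B} | k <- enum 'I_n].
exists (undup s); split; first exact: (uniq_NoDup (undup_uniq s)).
  move=> b; rewrite (In_mem (T := {classic B})) mem_undup; split.
    by case/mapP=> k _ ->; exists k.
  by case=> k <-; apply: map_f; rewrite mem_enum.
have -> : map (fibre_card pi) (undup s) = [seq count_mem b s | b <- undup s].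
  apply: eq_map => b; rewrite /fibre_card cardsE cardE /enum_mem size_filter count_map.
  by rewrite enumT.
have <- : size s = n by rewrite size_map size_enum_ord.
rewrite -(perm_size (perm_count_undup s)) size_flatten /shape -map_comp.
by congr sumn; apply: eq_map => b /=; rewrite size_nseq.
Qed.

(* [link_key] is the [key] of [link_Kvv]; the link edges at the link vertex
   (b, j) are those whose key is [star_key b j k] for some k. *)
Definition link_key v (l1 l2 : bool * 'I_v) : 'I_v * 'I_v :=
  if l1.1 then (l2.2, l1.2) else (l1.2, l2.2).

Definition star_key v (b : bool) (j k : 'I_v) : 'I_v * 'I_v :=
  if b then (k, j) else (j, k).

Lemma star_key_inj v b (j : 'I_v) : injective (star_key b j).
Proof. by case: b => k l []. Qed.

Lemma link_key_star v (l1 l2 : bool * 'I_v) b j k :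
  l1.1 <> l2.1 -> link_key l1 l2 = star_key b j k -> l1 = (b, j) \/ l2 = (b, j).
Proof. by case: l1 l2 b => [[] ?] [[] ?] [] //= _ [-> ->]; auto. Qed.

Lemma star_link_key v (l1 l2 : bool * 'I_v) b j :
  l1.1 <> l2.1 -> l1 = (b, j) \/ l2 = (b, j) -> exists k, link_key l1 l2 = star_key b j k.
Proof.
rewrite /link_key /star_key => ne [] eq_bj; subst; move: ne => /=.
  by case: b l2 => -[[] i] ne //=; eexists.
by case: b l1 => -[[] i] ne //=; eexists.
Qed.

Section EdgeStar.
Variables (X : polycx) (v : nat) (e : Ed X) (phi : Ed X * bool -> bool * 'I_v).

Local Notation x := (evert e false).
Local Notation o := (e, false).
Local Notation corner_at c := (oend (side (projT2 c)) = x).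

Definition lab1 (c : {f : Fc X & 'I_(nsides f)}) := phi (oflip (side (projT2 c))).
Definition lab2 (c : {f : Fc X & 'I_(nsides f)}) := phi (side (ordS (projT2 c))).

Hypothesis phi_inj :
  forall o1 o2, ostart o1 = x -> ostart o2 = x -> phi o1 = phi o2 -> o1 = o2.
Hypothesis lab_sides : forall c, corner_at c -> (lab1 c).1 <> (lab2 c).1.
Hypothesis link_key_inj : forall c c', corner_at c -> corner_at c' ->
  link_key (lab1 c) (lab2 c) = link_key (lab1 c') (lab2 c') -> c = c'.
Hypothesis link_key_onto : forall k, exists c, corner_at c /\ link_key (lab1 c) (lab2 c) = k.

Definition corner_at_o c := corner_at c /\ (lab1 c = phi o \/ lab2 c = phi o).

Lemma corner_enum : exists E : 'I_v -> {f : Fc X & 'I_(nsides f)}, enumerates E corner_at_o.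
Proof.
case def_o: (phi o) => [b j].
have /choice[E E_key] := link_key_onto (star_key b j _).
exists E; split=> [k l Ekl | k | c [xc touch]].
- by apply: (@star_key_inj _ b j); rewrite -(E_key k).2 -(E_key l).2 Ekl.
- have [xk kk] := E_key k; split=> //.
  by rewrite def_o; apply: link_key_star kk; apply: lab_sides.
- rewrite def_o in touch; have [k ck] := star_link_key (lab_sides xc) touch.
  by exists k; apply: link_key_inj (E_key k).1 xc _; rewrite ck (E_key k).2.
Qed.

Lemma lab1_o c : corner_at c -> lab1 c = phi o -> oflip (side (projT2 c)) = o.
Proof. by move=> xc; apply: phi_inj. Qed.

Lemma lab2_o c : corner_at c -> lab2 c = phi o -> side (ordS (projT2 c)) = o.
Proof. by move=> xc; apply: phi_inj; rewrite // /ostart -side_closed. Qed.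

(* A corner at x touching o arrives at x along e (then its own side lies on e)
   or leaves x along e (then the next side does). *)
Definition star_edge (c : {f : Fc X & 'I_(nsides f)}) : sdE X :=
  let: existT f i := c in if lab1 c == phi o then FE i else FE (ordS i).

Lemma star_edge_st c : corner_at_o c -> sd_st (star_edge c) = SE e.
Proof.
case: c => f i [xc touch] /=; case: eqP => [/(lab1_o xc) | lab1_no].
  by move/(congr1 fst) => /= ->.
by case: touch => // /(lab2_o xc) /= ->.
Qed.

Lemma FE_inj (f f' : Fc X) (i : 'I_(nsides f)) (i' : 'I_(nsides f')) :
  FE i = FE i' -> existT _ f i = existT _ f' i' :> {g : Fc X & 'I_(nsides g)}.
Proof. by case. Qed.

Lemma lab2_o_of c : corner_at_o c -> lab1 c <> phi o -> side (ordS (projT2 c)) = o.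
Proof. by case=> xc [// | /(lab2_o xc)]. Qed.

Lemma star_edge_inj c c' :
  corner_at_o c -> corner_at_o c' -> star_edge c = star_edge c' -> c = c'.
Proof.
move=> oc oc'; have [xc _] := oc; have [xc' _] := oc'.
have sideE (c1 c2 : {g : Fc X & 'I_(nsides g)}) :
  c1 = c2 -> side (projT2 c1) = side (projT2 c2) by move->.
case: c c' oc oc' xc xc' => f i [f' i'] oc oc' xc xc' /=.
case: eqP => [/(lab1_o xc) fo | /(lab2_o_of oc) so];
  case: eqP => [/(lab1_o xc') fo' | /(lab2_o_of oc') so'] /FE_inj //.
- by move/sideE => /= si; move: fo; rewrite si so'.
- by move/sideE => /= si; move: fo'; rewrite -si so.
move/(congr1 (fun c : {g : Fc X & 'I_(nsides g)} =>
  existT (fun g => 'I_(nsides g)) (projT1 c) (ord_pred (projT2 c)))).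
by rewrite /= !ordSK.
Qed.

Lemma star_edge_onto a : sd_st a = SE e -> exists2 c, corner_at_o c & star_edge c = a.
Proof.
case: a => [// | f i | //] [se]; case sb: (side i).2.
  have si : side i = oflip o by rewrite (surjective_pairing (side i)) se sb.
  have l1 : lab1 (existT _ f i) = phi o by rewrite /lab1 /= si.
  by exists (existT _ f i); [split; [rewrite /= si | left] | rewrite /= l1 eqxx].
have si : side i = o by rewrite (surjective_pairing (side i)) se sb.
have xc : oend (side (ord_pred i)) = x by rewrite /oend side_closed ord_predK -/(ostart _) si.
have l2 : lab2 (existT _ f (ord_pred i)) = phi o by rewrite /lab2 /= ord_predK si.
exists (existT _ f (ord_pred i)); first by split; [exact: xc | right].
rewrite /=; case: eqP => [l1 | _]; last by rewrite ord_predK.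
by case: (@lab_sides (existT _ f (ord_pred i)) xc); rewrite l1 l2.
Qed.

End EdgeStar.

Lemma edge_star X v (e : Ed X) : link_Kvv v (evert e false) ->
  exists E : 'I_v -> sdE X, enumerates E (fun a => sd_st a = SE e).
Proof.
case=> phi [phi_inj [_ [sides [key_inj key_onto]]]].
have [E enumE] := corner_enum sides key_inj key_onto.
exists (star_edge e phi \o E); apply: enumerates_comp enumE _ _ _.
- exact: star_edge_st.
- exact: star_edge_inj.
- exact: star_edge_onto.
Qed.

Lemma enumerates_fibre (T B : Type) n (E : 'I_n -> T) (P : T -> Prop) (g : T -> B) b :
  enumerates E P ->
  exists F : 'I_(fibre_card (g \o E) b) -> T, enumerates F (fun t => P t /\ g t = b).
Proof.
case=> E_inj PE E_onto; exists (E \o enum_val).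
split=> [i j /E_inj/enum_val_inj // | i | t [Pt gt]].
  by have := enum_valP i; rewrite inE => /eqP gi; split; [exact: PE | exact: gi].
have [k Ek] := E_onto t Pt.
have kF : k \in [set k | (g (E k) : {classic B}) == b] by rewrite inE Ek gt.
by exists (enum_rank_in kF k); rewrite /= enum_rankK_in.
Qed.

(* Otherwise the vertex argument of the section variable [phi] becomes implicit. *)
Unset Implicit Arguments.

Section InducedComplex.
Variables (Y : polycx) (C : cgroups (Sd Y)) (X : polycx) (Gam : group)
  (A : action Gam (Sd X)) (q : smorph (Sd X) (Sd Y))
  (lift : sV (Sd Y) -> sV (Sd X)) (liftE : sE (Sd Y) -> sE (Sd X))
  (h : sE (Sd Y) -> Gam) (phi : forall s : sV (Sd Y), cG C s -> Gam)
  (phiE : sE (Sd Y) -> Gam).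

Hypothesis actE1 : forall a, actE A gone a = a.
Hypothesis actEM : forall g k a, actE A (gmul g k) a = actE A g (actE A k a).
Hypothesis actVM : forall g k x, actV A (gmul g k) x = actV A g (actV A k x).
Hypothesis si_act : forall g a, si (actE A g a) = actV A g (si a).
Hypothesis st_act : forall g a, st (actE A g a) = actV A g (st a).
Hypothesis act_no_inversion : forall g a, actV A g (si a) = si a -> actE A g a = a.
Hypothesis q_st : forall a, st (mE q a) = mV q (st a).
Hypothesis q_act : forall g a, mE q (actE A g a) = mE q a.
Hypothesis q_orbit : forall a a', mE q a = mE q a' -> exists g, actE A g a = a'.
Hypothesis liftK : forall s, mV q (lift s) = s.
Hypothesis liftEK : forall a, mE q (liftE a) = a /\ si (liftE a) = lift (si a).
Hypothesis h_st : forall a, actV A (h a) (st (liftE a)) = lift (st a).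
Hypothesis phi_stab : forall s, is_mono (phi s) /\
  forall g, actV A g (lift s) = lift s <-> exists x, phi s x = g.
Hypothesis phiE_stab : forall a, actV A (phiE a) (lift (st a)) = lift (st a).
Hypothesis phi_psi : forall a (x : cG C (si a)),
  gconj (phiE a) (gconj (h a) (phi (si a) x)) = phi (st a) (cpsi C a x).
Hypothesis q_dim : forall x, sdim (mV q x) = sdim x.

Lemma actEK g a : actE A (ginv g) (actE A g a) = a.
Proof. by rewrite -actEM gmulVg actE1. Qed.

Lemma actE_conj g k a : actE A (gconj g k) (actE A g a) = actE A g (actE A k a).
Proof. by rewrite /gconj !actEM actEK. Qed.

(* The lift of a ending at lift (st a): its orbit under the stabiliser
   phi (st a) of that vertex is the set of all such lifts. *)
Definition tlift a := actE A (gmul (phiE a) (h a)) (liftE a).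

Lemma tlift_st a : st (tlift a) = lift (st a).
Proof. by rewrite st_act actVM h_st phiE_stab. Qed.

Lemma q_tlift a : mE q (tlift a) = a.
Proof. by rewrite q_act (liftEK a).1. Qed.

Lemma psi_stab a (z : cG C (st a)) :
  (exists x, cpsi C a x = z) <-> actE A (phi (st a) z) (tlift a) = tlift a.
Proof.
split=> [[x <-] | fix_z].
  rewrite -phi_psi /tlift actEM !actE_conj; congr (actE A _ (actE A _ _)).
  by apply: act_no_inversion; rewrite (liftEK a).2; apply/(phi_stab _).2; exists x.
pose w := gmul (gmul (ginv (gmul (phiE a) (h a))) (phi (st a) z)) (gmul (phiE a) (h a)).
have fix_w : actE A w (liftE a) = liftE a.
  by rewrite /w actEM (actEM (ginv _)) -/(tlift a) fix_z actEK.
have [x phix] : exists x, phi (si a) x = w.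
  by apply/(phi_stab _).2; rewrite -(liftEK a).2 -si_act fix_w.
exists x; apply: (phi_stab _).1.2.
by rewrite -phi_psi phix /w gconjM gconjK.
Qed.

Lemma tlift_orbit a t :
  (exists z, actE A (phi (st a) z) (tlift a) = t) <-> st t = lift (st a) /\ mE q t = a.
Proof.
split=> [[z <-] | [st_t q_t]].
  by rewrite st_act tlift_st q_act q_tlift; split=> //; apply/(phi_stab _).2; exists z.
have [g gt] := q_orbit (tlift a) t (etrans (q_tlift a) (esym q_t)).
have /(phi_stab _).2 [z phiz] : actV A g (lift (st a)) = lift (st a).
  by rewrite -{1}tlift_st -st_act gt.
by exists z; rewrite phiz.
Qed.

Lemma Ind_is_enumerates a n (E : 'I_n -> sE (Sd X)) :
  enumerates E (fun t => st t = lift (st a) /\ mE q t = a) -> Ind_is C a n.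
Proof.
case=> E_inj PE E_onto; have phi_hom := (phi_stab (st a)).1.1.
apply: (index_is_eq (fun z => iff_sym (psi_stab a z))).
apply: (index_is_orbit (act := fun z => actE A (phi (st a) z))) E_inj _ _.
- by move=> t /=; rewrite hom1 // actE1.
- by move=> g k t /=; rewrite phi_hom actEM.
- by move=> k; apply/tlift_orbit.
- by move=> z; apply: E_onto; apply/tlift_orbit; exists z.
Qed.

Lemma lift_edge e : exists e', lift (SE e) = SE e'.
Proof.
have := q_dim (lift (SE e)); rewrite liftK.
by case: (lift (SE e)) => // e' _; exists e'.
Qed.

Lemma v_thick_of_links v : (forall x : Vt X, link_Kvv v x) -> v_thick v C.
Proof.
move=> links e; have [e' lift_e] := lift_edge e.
have [E enumE] := edge_star (links (evert e' false)); have [_ st_E E_onto] := enumE.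
have {}st_E k : @st (Sd X) (E k) = SE e' := st_E k.
have [l [l_uniq l_mem l_sum]] := sum_fibre_card (mE q \o E).
have mem_l a : List.In a l <-> st a = SE e.
  rewrite l_mem; split=> [[k <-] | st_a].
    by rewrite /comp q_st st_E -lift_e liftK.
  have [k Ek] := E_onto (tlift a) (etrans (tlift_st a) (etrans (congr1 lift st_a) lift_e)).
  by exists k; rewrite /comp Ek q_tlift.
exists l, (fibre_card (mE q \o E)).
split; [done | split; [exact: mem_l | split=> // a /mem_l st_a]].
have [F enumF] := enumerates_fibre (mE q) a enumE.
by apply: (Ind_is_enumerates a _ F); rewrite st_a lift_e.
Qed.

End InducedComplex.

Arguments v_thick_of_links {Y C X Gam A q lift liftE h phi phiE}.

Theorem lemma4p3 (p v : nat) (Y : polycx) (C : cgroups (Sd Y)) :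
  5 <= p -> 2 <= v ->
  is_cgroups C ->
  developable_with_cover C (is_bourdon p v) ->
  v_thick v C.
Proof.
(* Only the K_{v,v} links of the cover and the local data of the action matter. *)
move=> _ _ _ [X [Gam [A [q [lift [liftE [h [phi [phiE
  [[_ [_ [_ [_ [links _]]]]] [act_A [q_morph [q_quot [liftK [liftEK
  [h_st [phi_stab [phiE_stab [phi_psi _]]]]]]]]]]]]]]]]]]].
have [_ [actE1 [actVM [actEM [si_act [st_act [_ [_ [_ no_inv]]]]]]]]] := act_A.
have [_ [q_st [_ q_dim]]] := q_morph.
have [_ [q_act [_ [_ [_ q_orbit]]]]] := q_quot.
exact: (v_thick_of_links actE1 actEM actVM si_act st_act no_inv q_st q_act q_orbit
  liftK liftEK h_st phi_stab phiE_stab phi_psi q_dim v links).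
Qed.
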